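(* For any prime number $p$ and any integer $n\ge 1$, $$r(p,n)=\frac{p^{2n-1}+p^{n+1}-p^{n-1}+p^2-p-1}{p^2-1}.$$
   Context: For a prime $p$ and $n\ge 1$, $r(p,n)$ denotes the number of orbits of the left action of $\mathrm{SL}(2,\mathbb{Z})$ on $(\mathbb{Z}_p\times\mathbb{Z}_p)^n$, where elements of $(\mathbb{Z}_p\times\mathbb{Z}_p)^n$ are viewed as $2\times n$ matrices over $\mathbb{Z}_p$ and a matrix in $\mathrm{SL}(2,\mathbb{Z})$ acts by left matrix multiplication with entries reduced modulo $p$. *)

From HB Require Import structures.
From mathcomp Require Import all_boot all_order all_algebra.
From Stdlib Require Import ClassicalEpsilon.
Set Implicit Arguments. Unset Strict Implicit. Unset Printing Implicit Defensive.
Import GRing.Theory.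
Local Open Scope ring_scope.

Definition decP (P : Prop) : bool :=
  if excluded_middle_informative P then true else false.

Definition sl2z_act (p n : nat) (M : 'M[int]_2) (A : 'M['Z_p]_(2, n))
  : 'M['Z_p]_(2, n) :=
  map_mx (fun z : int => z%:~R) M *m A.

Definition sl2z_orbit (p n : nat) (A : 'M['Z_p]_(2, n)) : {set 'M['Z_p]_(2, n)} :=
  [set B | decP (exists M : 'M[int]_2, \det M = 1 /\ sl2z_act M A = B)].

(* r(p,n): the number of orbits of SL(2,Z) on (Z_p x Z_p)^n. *)
Definition r (p n : nat) : nat :=
  #|[set sl2z_orbit A | A : 'M['Z_p]_(2, n)]|.

(* SL(2,Z) acts on (Z_p x Z_p)^n through its reduction SL(2,F_p), and this
   reduction is onto: SL(2,F_p) is generated by elementary unipotent matrices,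
   each of which lifts.  So r(p,n) counts SL(2,F_p)-orbits on 2 x n matrices A,
   and since orbits partition the matrices, their number is the sum over A of
   1/|orbit(A)|.  The orbit of 0 is a point; SL(2,F_p) acts freely on the
   rank-two matrices, so their orbits have size |SL(2,F_p)| = p(p^2 - 1); a
   rank-one A = v w has orbit {u w | u <> 0}, of size p^2 - 1.  There are
   (p^n - 1)(p^n - p) rank-two matrices, and summing gives the formula. *)

From Pilot Require Import Defs.
From HB Require Import structures.
From mathcomp Require Import all_boot all_order all_algebra finfield.
From mathcomp Require Import ring zify.
From Stdlib Require Import ClassicalEpsilon.
Import GRing.Theory Num.Theory.
Set Implicit Arguments. Unset Strict Implicit. Unset Printing Implicit Defensive.
Local Open Scope ring_scope.

Section RowFree.
Variables (F : finFieldType) (n : nat).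
Local Notation q := #|F|.

Lemma card_row_space m (A : 'M[F]_(m, n)) : row_free A ->
  #|[set v : 'rV_n | (v <= A)%MS]| = (q ^ m)%N.
Proof.
move=> freeA; have -> : [set v : 'rV_n | (v <= A)%MS] = [set u *m A | u : 'rV_m].
  by apply/setP=> v; rewrite !inE; apply/submxP/imsetP=> [[u ->]|[u _ ->]]; exists u.
by rewrite card_imset ?card_mx ?mul1n //; apply: row_free_inj.
Qed.

Lemma row_free_col_mx m (v : 'rV[F]_n) (A : 'M_(m, n)) :
  row_free (col_mx v A) = row_free A && ~~ (v <= A)%MS.
Proof.
rewrite /row_free -addsmxE.
have := mxrank_sum_cap v A; have := rank_leq_row A; have := rank_leq_row v.
have [vA|nvA] := boolP (v <= A)%MS.
  rewrite (addsmx_idPr vA) (capmx_idPl vA); lia.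
have v0 : v != 0 by apply: contraNneq nvA => ->; exact: sub0mx.
rewrite -mxrank_eq0 in v0.
have : (\rank (v :&: A)%MS < \rank v)%N.
  by rewrite (ltn_leqif (mxrank_leqif_sup (capmxSl v A))) sub_capmx submx_refl.
lia.
Qed.

Lemma card_row_free m :
  #|[set A : 'M[F]_(m, n) | row_free A]| = (\prod_(i < m) (q ^ n - q ^ i))%N.
Proof.
elim: m => [|m IHm].
  rewrite big_ord0 (@eq_card1 _ (0 : 'M_(0, n))) // => A.
  by rewrite !inE flatmx0 eqxx /row_free mxrank.unlock eqxx.
rewrite big_ord_recr /= -IHm -sum_nat_const -sum1_card -add1n.
rewrite (partition_big dsubmx (mem [set B : 'M[F]_(m, n) | row_free B])) /=; last first.
  by move=> A; rewrite !inE -[A in row_free A]vsubmxK row_free_col_mx => /andP[].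
apply: eq_bigr => B; rewrite inE => freeB.
rewrite (reindex (col_mx^~ B)) /=; last first.
  exists usubmx => [v _|A]; first by rewrite col_mxKu.
  by rewrite !inE => /andP[_ /eqP <-]; rewrite vsubmxK.
transitivity #|~: [set v : 'rV_n | (v <= B)%MS]|.
  rewrite -sum1_card; apply: eq_bigl => v.
  by rewrite !inE col_mxKd eqxx andbT row_free_col_mx freeB.
by rewrite cardsCs setCK card_row_space // card_mx mul1n.
Qed.
End RowFree.

Section Mx2.
Variable R : comNzRingType.

Definition mx2 (a b c d : R) : 'M[R]_2 :=
  \matrix_(i, j) if i == 0 then (if j == 0 then a else b) else (if j == 0 then c else d).

Lemma mx2E (A : 'M[R]_2) : A = mx2 (A 0 0) (A 0 1) (A 1 0) (A 1 1).
Proof.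
apply/matrixP=> i j; rewrite mxE.
by case: i => [[|[|//]] ?]; case: j => [[|[|//]] ?]; congr (A _ _); apply: val_inj.
Qed.

Lemma mul_mx2 a b c d a' b' c' d' :
  mx2 a b c d *m mx2 a' b' c' d' =
  mx2 (a * a' + b * c') (a * b' + b * d') (c * a' + d * c') (c * b' + d * d').
Proof.
apply/matrixP=> i j; rewrite !mxE big_ord_recl big_ord1 !mxE.
by case: i => [[|[|//]] ?]; case: j => [[|[|//]] ?].
Qed.

Lemma det_mx2 a b c d : \det (mx2 a b c d) = a * d - b * c.
Proof.
rewrite (expand_det_row _ 0) big_ord_recl big_ord1 /cofactor !det_mx11 !mxE /=.
by rewrite !expr0 !expr1 ?mul1r; ring.
Qed.
End Mx2.

Lemma map_mx2 (R S : comNzRingType) (f : R -> S) a b c d :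
  map_mx f (mx2 a b c d) = mx2 (f a) (f b) (f c) (f d).
Proof.
apply/matrixP=> i j; rewrite !mxE.
by case: i => [[|[|//]] ?]; case: j => [[|[|//]] ?].
Qed.

Section LiftSL2.
Variable F : fieldType.
Hypothesis intr_surj : forall x : F, exists k : int, k%:~R = x.

Definition SL2Z_image (g : 'M[F]_2) :=
  exists2 M : 'M[int]_2, \det M = 1 & map_mx intr M = g.

Lemma SL2Z_imageM g h : SL2Z_image g -> SL2Z_image h -> SL2Z_image (g *m h).
Proof.
move=> [M dM <-] [N dN <-]; exists (M *m N); last by rewrite map_mxM.
by rewrite det_mulmx dM dN mulr1.
Qed.

Lemma SL2Z_image_upper x : SL2Z_image (mx2 1 x 0 1).
Proof.
have [k <-] := intr_surj x; exists (mx2 1 k 0 1).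
  by rewrite det_mx2 mulr1 mulr0 subr0.
by rewrite map_mx2 rmorph1 rmorph0.
Qed.

Lemma SL2Z_image_lower x : SL2Z_image (mx2 1 0 x 1).
Proof.
have [k <-] := intr_surj x; exists (mx2 1 0 k 1).
  by rewrite det_mx2 mulr1 mul0r subr0.
by rewrite map_mx2 rmorph1 rmorph0.
Qed.

Lemma SL2Z_image_corner_neq0 a b c d : c != 0 -> a * d - b * c = 1 ->
  SL2Z_image (mx2 a b c d).
Proof.
move=> c0 det1.
have eb : b = (a * d - 1) / c by rewrite -det1 opprB addrC subrK mulfK.
have -> : mx2 a b c d =
    mx2 1 ((a - 1) / c) 0 1 *m mx2 1 0 c 1 *m mx2 1 ((d - 1) / c) 0 1.
  by rewrite !mul_mx2 eb; congr mx2; field.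
apply: SL2Z_imageM; last exact: SL2Z_image_upper.
by apply: SL2Z_imageM; [exact: SL2Z_image_upper | exact: SL2Z_image_lower].
Qed.

Lemma SL2Z_image_det1 g : \det g = 1 -> SL2Z_image g.
Proof.
rewrite [g]mx2E det_mx2; move: (g 0 0) (g 0 1) (g 1 0) (g 1 1) => a b c d det1.
have [c0|] := eqVneq c 0; last by move/SL2Z_image_corner_neq0; apply.
have -> : mx2 a b c d = mx2 1 0 (-1) 1 *m (mx2 1 0 1 1 *m mx2 a b c d).
  by rewrite mulmxA !mul_mx2; congr mx2; ring.
apply: SL2Z_imageM; first exact: SL2Z_image_lower.
rewrite mul_mx2; apply: SL2Z_image_corner_neq0.
  rewrite c0 !mul1r addr0; apply: contra_eq_neq det1 => ->.
  by rewrite c0 mul0r mulr0 subr0 eq_sym oner_eq0.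
by apply: etrans det1; rewrite c0; ring.
Qed.
End LiftSL2.

Lemma card_classes_sum_inv (R : numFieldType) (T : finType) (C : T -> {set T}) :
  (forall x, x \in C x) -> (forall x y, y \in C x -> C y = C x) ->
  #|[set C x | x : T]|%:R = \sum_x (#|C x|%:R)^-1 :> R.
Proof.
move=> Crefl Ceq; rewrite (partition_big_imset C) /= -sum1_card natr_sum.
apply: eq_bigr => _ /imsetP[x _ ->].
transitivity (\sum_(y in C x) (#|C x|%:R)^-1 : R).
  rewrite sumr_const -[RHS]mulr_natr mulVf // pnatr_eq0 -lt0n.
  by apply/card_gt0P; exists x.
apply: eq_big => y; last by move=> /Ceq ->.
by apply/idP/eqP => [/Ceq | <-].
Qed.

Section SL2Orbits.
Variables (F : finFieldType) (n : nat).
Local Notation q := #|F|.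

Definition SL2 : {set 'M[F]_2} := [set g | \det g == 1].

Definition SL2_orbit (A : 'M[F]_(2, n)) := [set g *m A | g in SL2].

Lemma SL2_1 : 1%:M \in SL2. Proof. by rewrite inE det1. Qed.

Lemma SL2_mul g h : g \in SL2 -> h \in SL2 -> g *m h \in SL2.
Proof. by rewrite !inE det_mulmx => /eqP-> /eqP->; rewrite mulr1. Qed.

Lemma SL2_unit g : g \in SL2 -> g \in unitmx.
Proof. by rewrite inE unitmxE => /eqP->; rewrite unitr1. Qed.

Lemma SL2_inv g : g \in SL2 -> invmx g \in SL2.
Proof. by rewrite !inE det_inv => /eqP->; rewrite invr1. Qed.

Lemma SL2_orbit_refl A : A \in SL2_orbit A.
Proof. by apply/imsetP; exists 1%:M; rewrite ?mul1mx ?SL2_1. Qed.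

Lemma SL2_orbit_eq A B : B \in SL2_orbit A -> SL2_orbit B = SL2_orbit A.
Proof.
case/imsetP=> g gSL ->; apply/setP=> C.
apply/imsetP/imsetP=> [[h hSL ->]|[h hSL ->]].
  by exists (h *m g); rewrite ?mulmxA ?SL2_mul.
exists (h *m invmx g); first by rewrite SL2_mul ?SL2_inv.
by rewrite -mulmxA (mulmxA (invmx g)) mulVmx ?SL2_unit // mul1mx.
Qed.

Lemma card_SL2_orbit0 : #|SL2_orbit 0| = 1%N.
Proof.
apply: eq_card1 => B; rewrite !inE; apply/imsetP/eqP => [[g _ ->]|->].
  by rewrite mulmx0.
by exists 1%:M; rewrite ?SL2_1 ?mulmx0.
Qed.

Lemma card_SL2_orbit_row_free A : row_free A -> #|SL2_orbit A| = #|SL2|.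
Proof. by move=> freeA; apply/card_imset/row_free_inj. Qed.

Lemma cV2P (u v : 'cV[F]_2) : u 0 0 = v 0 0 -> u 1 0 = v 1 0 -> u = v.
Proof.
move=> e0 e1; apply/matrixP=> i j; rewrite [j]ord1.
by case: i => [[|[|//]] ?]; [move: e0 | move: e1]; congr (u _ _ = v _ _); apply: val_inj.
Qed.

Lemma SL2_first_col (v : 'cV[F]_2) : v != 0 ->
  exists2 g, g \in SL2 & g *m delta_mx 0 0 = v.
Proof.
move=> v0; set a := v 0 0; set c := v 1 0.
have [a0|a0] := eqVneq a 0.
  have c0 : c != 0 by apply: contraNneq v0 => c0; apply/eqP/cV2P; rewrite mxE.
  exists (mx2 0 (- c^-1) c 0); first by rewrite inE det_mx2 mul0r sub0r mulNr opprK mulVf.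
  by rewrite -colE; apply: cV2P; rewrite !mxE.
exists (mx2 a 0 c a^-1); first by rewrite inE det_mx2 mul0r subr0 mulfV.
by rewrite -colE; apply: cV2P; rewrite !mxE.
Qed.

Lemma SL2_transitive_col (u v : 'cV[F]_2) : u != 0 -> v != 0 ->
  exists2 g, g \in SL2 & g *m v = u.
Proof.
move=> /SL2_first_col[h hSL <-] /SL2_first_col[k kSL <-].
exists (h *m invmx k); first by rewrite SL2_mul ?SL2_inv.
by rewrite -mulmxA (mulmxA (invmx k)) mulVmx ?SL2_unit // mul1mx.
Qed.

Lemma card_SL2_orbit_rank1 A : \rank A = 1%N -> #|SL2_orbit A| = (q ^ 2 - 1)%N.
Proof.
move=> rA.
have [w Aw freew] : exists2 w : 'rV[F]_n, (w :=: A)%MS & row_free w.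
  by move: (row_base A) (eq_row_base A) (row_base_free A); rewrite rA => w; exists w.
set v := A *m pinvmx w.
have defA : A = v *m w by rewrite mulmxKpV // Aw.
have v0 : v != 0.
  by apply: contraTneq isT => v0; move: rA; rewrite defA v0 mul0mx mxrank0.
have -> : SL2_orbit A = [set u *m w | u in [set~ 0]].
  apply/setP=> B; apply/imsetP/imsetP => [[g gSL ->]|[u]].
    exists (g *m v); last by rewrite defA mulmxA.
    rewrite !inE; apply: contraNneq v0 => gv0.
    by rewrite -(mul1mx v) -(mulVmx (SL2_unit gSL)) -mulmxA gv0 mulmx0.
  rewrite !inE => u0 ->; have [g gSL gv] := SL2_transitive_col u0 v0.
  by exists g; rewrite // defA mulmxA gv.
by rewrite card_imset ?cardsC1 ?card_mx ?muln1 ?subn1 //; apply: row_free_inj.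
Qed.

Lemma card_det_fiber d : d != 0 -> #|[set g : 'M[F]_2 | \det g == d]| = #|SL2|.
Proof.
move=> d0; pose D := mx2 d 0 0 1.
have detD : \det D = d by rewrite det_mx2 mulr1 mulr0 subr0.
have unitD : D \in unitmx by rewrite unitmxE detD unitfE.
have -> : [set g : 'M[F]_2 | \det g == d] = mulmx D @: SL2.
  apply/setP=> g; rewrite inE; apply/eqP/imsetP => [detg|[h]].
    exists (invmx D *m g); last by rewrite mulmxA mulmxV // mul1mx.
    by rewrite inE det_mulmx det_inv detD detg mulVf.
  by rewrite inE => /eqP deth ->; rewrite det_mulmx detD deth mulr1.
apply/card_imset/(can_inj (g := mulmx (invmx D))) => g.
by rewrite mulmxA mulVmx ?mul1mx.
Qed.

Lemma card_SL2 : #|SL2| = (q * (q ^ 2 - 1))%N.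
Proof.
have card_GL : #|'GL_2[F]%g| = (q.-1 * #|SL2|)%N.
  rewrite cardsT card_sub -[LHS]sum1_card.
  rewrite (partition_big (fun g : 'M[F]_2 => \det g) (fun d => d != 0)) /=; last first.
    by move=> g; rewrite inE unitmxE unitfE.
  rewrite -(cardC1 (0 : F)) -sum_nat_const.
  apply: eq_big => [d|d d0]; first by rewrite !inE.
  rewrite sum1_card -(card_det_fiber d0); apply: eq_card => g.
  rewrite unfold_in /= !inE unitmxE unitfE.
  by rewrite andb_idl // => /eqP ->.
have q1_gt0 : (0 < q.-1)%N by rewrite -subn1 subn_gt0 finNzRing_gt1.
apply/eqP; rewrite -(eqn_pmul2l q1_gt0) -card_GL card_GL_2 -(exp1n 2) subn_sqr.
by rewrite subn1 addn1; apply/eqP; ring.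
Qed.
End SL2Orbits.

Lemma orbit_mass_closed_form (R : fieldType) (q : R) n : (0 < n)%N ->
  q != 0 -> q ^+ 2 - 1 != 0 ->
  let N := (q ^+ n - 1) * (q ^+ n - q) in
  1 + (q ^+ (2 * n) - 1 - N) / (q ^+ 2 - 1) + N / (q * (q ^+ 2 - 1)) =
  (q ^+ (2 * n - 1) + q ^+ (n + 1) - q ^+ (n - 1) + q ^+ 2 - q - 1) / (q ^+ 2 - 1).
Proof.
case: n => // m _ q0 q21 N; rewrite /N !subn1 exprS /=.
have -> : q ^+ (2 * m.+1) = q ^+ 2 * (q ^+ m) ^+ 2.
  by rewrite -exprM -exprD; congr (_ ^+ _); lia.
have -> : q ^+ (2 * m.+1).-1 = q * (q ^+ m) ^+ 2.
  by rewrite -exprM -exprS; congr (_ ^+ _); lia.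
have -> : q ^+ (m.+1 + 1) = q ^+ 2 * q ^+ m by rewrite -exprD; congr (_ ^+ _); lia.
by field; rewrite q0 q21.
Qed.

Section Mass.
Variables (F : finFieldType) (n : nat).
Local Notation q := #|F|.
Local Notation N := #|[set A : 'M[F]_(2, n) | row_free A]|.

Lemma sum_inv_card_SL2_orbit (R : numFieldType) :
  \sum_(A : 'M[F]_(2, n)) (#|SL2_orbit A|%:R)^-1 =
  1 + ((q ^ (2 * n))%:R - 1 - N%:R) / (q ^ 2 - 1)%:R + N%:R / #|SL2 F|%:R :> R.
Proof.
rewrite (bigD1 0) //= card_SL2_orbit0 invr1 -addrA; congr (_ + _).
rewrite (bigID (fun A : 'M[F]_(2, n) => row_free A)) /= addrC.
have cardN : #|[pred A : 'M[F]_(2, n) | (A != 0) && row_free A]| = N.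
  apply: eq_card => A; rewrite !inE andb_idl // => freeA.
  by rewrite -mxrank_eq0 (eqnP freeA).
have card_rank1 : (#|[pred A : 'M[F]_(2, n) | (A != 0%R) && ~~ row_free A]| + N)%N =
    (q ^ (2 * n)).-1.
  rewrite -cardN -(card_mx F 2 n) -(cardC1 0) addnC.
  rewrite -(cardID (mem [set A : 'M[F]_(2, n) | row_free A]) (predC1 0)).
  by congr (_ + _); apply: eq_card => A; rewrite !inE /= andbC.
congr (_ + _).
  rewrite (eq_bigr (fun _ => ((q ^ 2 - 1)%:R)^-1)) => [|A /andP[A0 notfreeA]]; last first.
    rewrite card_SL2_orbit_rank1 //; move: A0 notfreeA; rewrite -mxrank_eq0 /row_free.
    by have := rank_leq_row A; case: (\rank A) => [|[|[|]]].
  rewrite sumr_const -[_ *+ #|_|]mulr_natl; congr (_ * _).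
  apply: (addIr N%:R); rewrite subrK -natrD card_rank1 -subn1 natrB ?natr1 //.
  by rewrite expn_gt0 (ltnW (finNzRing_gt1 F)).
rewrite (eq_bigr (fun _ => (#|SL2 F|%:R)^-1)) => [|A /andP[_ freeA]]; last first.
  by rewrite card_SL2_orbit_row_free.
by rewrite sumr_const -[_ *+ #|_|]mulr_natl cardN.
Qed.
End Mass.

Lemma card_SL2_orbits (F : finFieldType) n (R : numFieldType) : (0 < n)%N ->
  let q : R := #|F|%:R in
  #|[set SL2_orbit A | A : 'M[F]_(2, n)]|%:R =
  (q ^+ (2 * n - 1) + q ^+ (n + 1) - q ^+ (n - 1) + q ^+ 2 - q - 1) / (q ^+ 2 - 1).
Proof.
move=> n_gt0 q; have q_gt1 := finNzRing_gt1 F.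
rewrite (card_classes_sum_inv _ (@SL2_orbit_refl F n) (@SL2_orbit_eq F n)).
rewrite sum_inv_card_SL2_orbit card_row_free card_SL2 big_ord_recr big_ord1 /=.
have qn_ge : forall i, (i <= n)%N -> (#|F| ^ i <= #|F| ^ n)%N.
  by move=> i; apply: leq_pexp2l; rewrite ltnW.
rewrite !natrM !natrB ?(qn_ge 0%N) ?(qn_ge 1%N) ?expn_gt0 ?(ltnW q_gt1) //.
rewrite expn0 expn1 !natrX -/q; apply: orbit_mass_closed_form => //.
  by rewrite pnatr_eq0 -lt0n ltnW.
by rewrite -natrX subr_eq0 pnatr_eq1 -(exp1n 2) eqn_exp2r // gtn_eqF.
Qed.

Lemma decPP (P : Prop) : reflect P (Defs.decP P).
Proof. by rewrite /Defs.decP; case: (excluded_middle_informative P); constructor. Qed.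

Definition SL2Z_orbit (R : finComUnitRingType) n (A : 'M[R]_(2, n)) :
    {set 'M[R]_(2, n)} :=
  [set B | Defs.decP (exists M : 'M[int]_2, \det M = 1 /\ map_mx intr M *m A = B)].

(* For prime p, 'Z_p and 'F_p are the same ordinal ring 'I_m.+2 (Fp_Zcast), so
   r p n, which is stated over 'Z_p, can be read over the field 'F_p. *)
Lemma r_Fp p n : prime p -> r p n = #|[set SL2Z_orbit A | A : 'M['F_p]_(2, n)]|.
Proof.
move=> p_pr; pose orbits m := #|[set SL2Z_orbit A | A : 'M['I_m.+2]_(2, n)]|.
by rewrite -[r p n]/(orbits (Zp_trunc p)) -(Fp_Zcast p_pr).
Qed.

Lemma Fp_intr_surj p (x : 'F_p) : exists k : int, k%:~R = x.
Proof. by exists (Posz (nat_of_ord x)); rewrite -pmulrn natr_Zp. Qed.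

Lemma SL2Z_orbit_SL2 (F : finFieldType) n (A : 'M[F]_(2, n)) :
  (forall x : F, exists k : int, k%:~R = x) -> SL2Z_orbit A = SL2_orbit A.
Proof.
move=> intr_surj; apply/setP=> B; rewrite inE; apply/decPP/imsetP.
  move=> [M [detM <-]]; exists (map_mx intr M) => //.
  by rewrite inE det_map_mx detM rmorph1.
move=> [g]; rewrite inE => /eqP /(SL2Z_image_det1 intr_surj) [M detM gM] ->.
by exists M; rewrite gM.
Qed.

Theorem theorem4p3 (p n : nat) : prime p -> (1 <= n)%N ->
  (r p n)%:R =
    ((p%:R ^+ (2 * n - 1) + p%:R ^+ (n + 1) - p%:R ^+ (n - 1) + p%:R ^+ 2
      - p%:R - 1) / (p%:R ^+ 2 - 1) : rat).
Proof.
move=> p_pr n_gt0.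
rewrite r_Fp // (eq_imset _ (fun A => SL2Z_orbit_SL2 A (@Fp_intr_surj p))).
by rewrite card_SL2_orbits // card_Fp.
Qed.
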